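(* Let $\mathcal L$ be a language satisfying RBC with growth constant $K$. Then there is $N$ such that for every $w\in\mathcal L$ with $|w|\ge N$ that has a valid step, the set of exit words for $w$ with its minimal valid step $q$ has at most $2K^2$ elements.
   Context: A language is a set $\mathcal L$ of nonempty finite words over a finite alphabet $\mathcal A$, containing $\mathcal A$, closed under subwords, every word extendable on both sides. $Ex^\ell(w)=\{a:aw\in\mathcal L\}$, $Ex^r(w)=\{b:wb\in\mathcal L\}$; left special if $|Ex^\ell(w)|\ge2$, right special if $|Ex^r(w)|\ge2$, bispecial if both; regular bispecial if there is exactly one $\hat a\in Ex^\ell(w)$ with $\hat aw$ right special and exactly one $\hat b\in Ex^r(w)$ with $w\hat b$ left special. RBC: for some $n_0$ every bispecial word of length $\ge n_0$ is regular bispecial. Under RBC, $p(n+1)-p(n)$ ($p(n)$ the number of length-$n$ words of $\mathcal L$) equals a constant $K$ for all large $n$: the growth constant. For $n\ge2$, $w\in\mathcal A^n$ and integer $1\le q\le n/2$ with $w_{[q+1,n]}=w_{[1,n-q]}$, $w^{q\ast r}$ is the word of length $n+(r-1)q$ with $(w^{q\ast r})_{[q(i-1)+1,q(i-1)+n]}=w$ for $1\le i\le r$; $q$ is valid for $w$ in $\mathcal L$ if moreover $w^{q\ast2}\in\mathcal L$; the minimal valid step is the least one. An exit word for $w$ with step $q$ is a word $z=pw^{q\ast r}s$, $r\ge1$, $1\le|p|,|s|\le q$, such that $z\in\mathcal L$; $pw^{q\ast r}$ is not a suffix of $w^{q\ast(r+1)}$ but $p_{[2,|p|]}w^{q\ast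 r}$ is; and $w^{q\ast r}s$ is not a prefix of $w^{q\ast(r+1)}$ but $w^{q\ast r}s_{[1,|s|-1]}$ is (with $p_{[2,1]}$, $s_{[1,0]}$ empty). *)

From mathcomp Require Import all_boot.
Set Implicit Arguments. Unset Strict Implicit. Unset Printing Implicit Defensive.

Section Lang.
Variable A : finType.
Variable L : seq A -> bool.

Definition is_language : Prop :=
  [/\ (forall w, L w -> w != [::]),
      (forall a : A, L [:: a]),
      (forall u v x, L (u ++ v ++ x) -> v != [::] -> L v),
      (forall w, L w -> exists a, L (a :: w)) &
      (forall w, L w -> exists b, L (rcons w b))].

Definition Exl (w : seq A) : {set A} := [set a | L (a :: w)].
Definition Exr (w : seq A) : {set A} := [set b | L (rcons w b)].

Definition left_special w := 1 < #|Exl w|.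
Definition right_special w := 1 < #|Exr w|.
Definition bispecial w := left_special w && right_special w.

Definition regular_bispecial w :=
  [&& bispecial w,
      #|[set a in Exl w | right_special (a :: w)]| == 1 &
      #|[set b in Exr w | left_special (rcons w b)]| == 1].

Definition RBC : Prop :=
  exists n0, forall w, L w -> n0 <= size w -> bispecial w -> regular_bispecial w.

Definition complexity (n : nat) : nat := #|[set t : n.-tuple A | L t]|.

Definition growth_constant (K : nat) : Prop :=
  exists n1, forall n, n1 <= n -> complexity n.+1 = complexity n + K.

(* w^{q*r}: for q-periodic w (drop q w = take (size w - q) w), this is the word
   of length |w| + (r-1) q all of whose windows at positions q(i-1), 1<=i<=r,
   equal w; it is obtained by appending r-1 copies of the last q letters. *)
Definition qpow (w : seq A) (q r : nat) : seq A :=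
  w ++ flatten (nseq r.-1 (drop (size w - q) w)).

Definition valid_step (w : seq A) (q : nat) : Prop :=
  [/\ 2 <= size w, 1 <= q, q * 2 <= size w,
      drop q w = take (size w - q) w & L (qpow w q 2)].

Definition min_valid_step w q : Prop :=
  valid_step w q /\ forall q', valid_step w q' -> q <= q'.

Definition exit_word (w : seq A) (q : nat) (z : seq A) : Prop :=
  exists (p s : seq A) (r : nat),
    [/\ 1 <= r, 1 <= size p <= q, 1 <= size s <= q,
        z = p ++ qpow w q r ++ s & L z] /\
    [/\ ~~ suffix (p ++ qpow w q r) (qpow w q r.+1),
        suffix (behead p ++ qpow w q r) (qpow w q r.+1),
        ~~ prefix (qpow w q r ++ s) (qpow w q r.+1) &
        prefix (qpow w q r ++ take (size s).-1 s) (qpow w q r.+1)].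

End Lang.

From mathcomp Require Import all_boot zify.
Set Implicit Arguments. Unset Strict Implicit. Unset Printing Implicit Defensive.

(* With q the minimal valid step of w, view w as the prefix of the q-periodic word
   k |-> w[k mod q].  An exit word then reads a.u.b, where u is a factor of this periodic
   word of length at least |w| and the letters a, b break the period.  Its left key, the pair
   (a, first |w| letters of u), is a non-periodic left extension of a word of length |w| whose
   periodic extension is also in L; there are at most sum_y (|Ex^l y| - 1) = p(|w|+1) - p(|w|) = K
   such pairs, and likewise K right keys.  By minimality of q the two keys determine a, b, the
   phase of u and its length mod q.  Two exit words with the same keys and lengths l < l' with
   l' - l > q would make the factor of length l bispecial with two right-special left extensions
   (the letter a and the periodic letter), contradicting RBC; hence every pair of keys is shared
   by at most two exit words. *)

Section PeriodicWord.
Variables (A : finType) (x0 : A) (w : seq A) (q : nat).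

Definition pword k := nth x0 w (k %% q).
Definition pwin s l := mkseq (fun k => pword (s + k)) l.

Lemma size_pwin s l : size (pwin s l) = l.
Proof. exact: size_mkseq. Qed.

Lemma nth_pwin s l k : k < l -> nth x0 (pwin s l) k = pword (s + k).
Proof. exact: nth_mkseq. Qed.

Lemma pword_mod a b : a = b %[mod q] -> pword a = pword b.
Proof. by rewrite /pword => ->. Qed.

Lemma pwordDr k : pword (k + q) = pword k.
Proof. by apply: pword_mod; rewrite modnDr. Qed.

Lemma pwin_mod s1 s2 l : s1 = s2 %[mod q] -> pwin s1 l = pwin s2 l.
Proof. by move=> E; apply: eq_mkseq => k; apply: pword_mod; rewrite -modnDml E modnDml. Qed.

Lemma pwin_cat s i j : pwin s (i + j) = pwin s i ++ pwin (s + i) j.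
Proof.
apply: (@eq_from_nth _ x0); rewrite ?size_cat ?size_pwin // => k kij.
rewrite nth_cat size_pwin nth_pwin //; case: ltnP => ki; rewrite nth_pwin //; last by lia.
by rewrite -addnA subnKC.
Qed.

Lemma pwin_cons s l : pwin s l.+1 = pword s :: pwin s.+1 l.
Proof. by rewrite -add1n pwin_cat /= /pwin /= addn0 addn1. Qed.

Lemma pwin_rcons s l : pwin s l.+1 = rcons (pwin s l) (pword (s + l)).
Proof. by rewrite -addn1 pwin_cat cats1 /pwin /= addn0. Qed.

Lemma take_pwin s l i : i <= l -> take i (pwin s l) = pwin s i.
Proof. by move=> il; rewrite -(subnKC il) pwin_cat take_size_cat ?size_pwin. Qed.

Lemma drop_pwin s l i : i <= l -> drop i (pwin s l) = pwin (s + i) (l - i).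
Proof. by move=> il; rewrite -{1}(subnKC il) pwin_cat drop_size_cat ?size_pwin. Qed.

Lemma prefix_pwin s l (u : seq A) : size u <= l -> prefix u (pwin s l) = (u == pwin s (size u)).
Proof. by move=> ul; rewrite prefixE take_pwin // eq_sym. Qed.

Lemma suffix_pwin s l (u : seq A) :
  size u <= l -> suffix u (pwin s l) = (u == pwin (s + (l - size u)) (size u)).
Proof. by move=> ul; rewrite suffixE size_pwin drop_pwin ?leq_subr // subKn // eq_sym. Qed.

Lemma pwin_periodic : 0 < q -> drop q w = take (size w - q) w -> w = pwin 0 (size w).
Proof.
move=> q_gt0 Hp; apply: (@eq_from_nth _ x0); rewrite ?size_pwin // => k kw.
rewrite nth_pwin // add0n /pword; elim/ltn_ind: k kw => k IH kw.
have [kq|qk] := ltnP k q; first by rewrite modn_small.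
have Ek : k = q + (k - q) by rewrite subnKC.
rewrite {1}Ek -nth_drop Hp nth_take; last by lia.
by rewrite IH; [rewrite {2}Ek modnDl | lia | lia].
Qed.

Lemma flatten_nseq_pwin s k : flatten (nseq k (pwin s q)) = pwin s (k * q).
Proof.
elim: k => [|k IH] /=; first by rewrite mul0n.
by rewrite IH mulSn pwin_cat (@pwin_mod (s + q) s) // modnDr.
Qed.

End PeriodicWord.

Section ExitForm.
Variables (A : finType) (L : seq A -> bool) (x0 : A) (w : seq A) (q : nat).
Local Notation pword := (pword x0 w q).
Local Notation pwin := (pwin x0 w q).
Hypotheses (q_gt0 : 0 < q) (q_le : q <= size w) (w_pwin : w = pwin 0 (size w)).

Lemma qpow_pwin r : qpow w q r = pwin 0 (size w + r.-1 * q).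
Proof.
rewrite /qpow; have -> : drop (size w - q) w = pwin (size w - q) q.
  by rewrite {2}w_pwin drop_pwin ?leq_subr // subKn.
rewrite flatten_nseq_pwin pwin_cat -w_pwin; congr (_ ++ _); apply: pwin_mod.
by rewrite add0n -{2}(subnK q_le) modnDr.
Qed.

(* The paper's p.w^{q*r}.s, read as a letter, a factor of the periodic word, and a letter. *)
Definition exit_form z s l a b :=
  [/\ z = a :: rcons (pwin s l) b, 0 < s <= q, size w <= l,
      (a != pword s.-1) && (b != pword (s + l)) & L z].

Lemma exit_word_form z : exit_word L w q z -> exists s l a b, exit_form z s l a b.
Proof.
case=> p [u] [r] [[r_gt0 /andP[p_gt0 p_le] /andP[u_gt0 u_le] -> Lz] [Nsuf Suf Npre Pre]].
rewrite !qpow_pwin /= in Lz Nsuf Suf Npre Pre *.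
have Em : size w + r * q = size w + r.-1 * q + q by rewrite -{1}(prednK r_gt0) mulSn; lia.
rewrite Em in Nsuf Suf Npre Pre; have m_ge := leq_addr (r.-1 * q) (size w).
move: (size w + r.-1 * q) m_ge Lz Nsuf Suf Npre Pre => m m_ge Lz Nsuf Suf Npre Pre.
case: p p_gt0 p_le Nsuf Suf Lz => [//|a p] _ /= p_le Nsuf Suf Lz.
case/lastP: u u_gt0 u_le Npre Pre Lz => [//|u b] _; rewrite size_rcons => u_le Npre Pre Lz.
rewrite -cats1 take_size_cat // in Pre.
set s := q - size p.
have Ep : p ++ pwin 0 m = pwin s (size p + m).
  apply/eqP; move: Suf; rewrite suffix_pwin ?size_cat ?size_pwin; last by lia.
  by have -> : 0 + (m + q - (size p + m)) = s by lia.
have Na : a != pword s.-1.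
  apply: contra Nsuf => /eqP->; rewrite suffix_pwin /= ?size_cat ?size_pwin; last by lia.
  have -> : 0 + (m + q - (size p + m).+1) = s.-1 by lia.
  by rewrite pwin_cons prednK ?Ep //; lia.
have Eu : u = pwin m (size u).
  move: Pre; rewrite prefix_pwin ?size_cat ?size_pwin; last by lia.
  by rewrite pwin_cat => /eqP/(congr1 (drop m)); rewrite !drop_size_cat ?size_pwin.
have Nb : b != pword (m + size u).
  apply: contra Npre => /eqP->; rewrite prefix_pwin ?size_cat ?size_pwin ?size_rcons; last by lia.
  by rewrite {1}Eu -pwin_rcons -pwin_cat.
exists s, (size p + m + size u), a, b; split=> //; try lia.
- rewrite pwin_cat -Ep -catA -!rcons_cat; congr (_ :: rcons (_ ++ (_ ++ _)) _).
  by rewrite {1}Eu; apply: pwin_mod; rewrite addnA subnK ?modnDl // ltnW.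
- rewrite Na /=; apply: contra Nb => /eqP->; apply/eqP/pword_mod.
  have -> : s + (size p + m + size u) = m + size u + q by lia.
  by rewrite modnDr.
Qed.

End ExitForm.

Section Language.
Variables (A : finType) (L : seq A -> bool).
Hypothesis HL : is_language L.

Lemma lang_infix u v x : L (u ++ v ++ x) -> v != [::] -> L v.
Proof. by case: HL => _ _ H _ _; apply: H. Qed.

Lemma lang_prefix u v : L (u ++ v) -> u != [::] -> L u.
Proof. exact: (@lang_infix [::]). Qed.

Lemma lang_suffix u v : L (u ++ v) -> v != [::] -> L v.
Proof. by move=> Luv; apply: (@lang_infix u v [::]); rewrite cats0. Qed.

Lemma rbc_no_2by2_extensions n0 t a b c d :
  (forall w, L w -> n0 <= size w -> bispecial L w -> regular_bispecial L w) ->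
  n0 <= size t -> t != [::] -> a != c -> b != d ->
  L (a :: rcons t b) -> L (a :: rcons t d) -> L (c :: rcons t b) -> L (c :: rcons t d) ->
  False.
Proof.
move=> HR n0t t0 ac bd Latb Latd Lctb Lctd.
have Lxt x y : L (x :: rcons t y) -> L (x :: t).
  by rewrite -cats1 -cat_cons => /lang_prefix; apply.
have Lty x y : L (x :: rcons t y) -> L (rcons t y).
  by rewrite -cat1s => /lang_suffix; apply; rewrite -size_eq0 size_rcons.
have Lt : L t by apply: (@lang_suffix [:: a]) (Lxt _ _ Latb) t0.
have rsp x : L (x :: rcons t b) -> L (x :: rcons t d) -> right_special L (x :: t).
  by move=> Lb Ld; apply/card_gt1P; exists b, d; rewrite !inE.
have bisp : bispecial L t.
  apply/andP; split; apply/card_gt1P.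
    by exists a, c; rewrite !inE (Lxt _ _ Latb) (Lxt _ _ Lctb).
  by exists b, d; rewrite !inE (Lty _ _ Latb) (Lty _ _ Latd).
case/and3P: (HR t Lt n0t bisp) => _ /eqP one_rsp _.
suff : 1 < #|[set x in Exl L t | right_special L (x :: t)]| by rewrite one_rsp.
apply/card_gt1P; exists a, c.
by rewrite !inE (Lxt _ _ Latb) (Lxt _ _ Lctb) (rsp _ Latb Latd) (rsp _ Lctb Lctd).
Qed.

End Language.

Lemma card_set_pair (T1 T2 : finType) (Q : pred (T1 * T2)) :
  #|[set p | Q p]| = \sum_(y : T1) #|[set a | Q (y, a)]|.
Proof.
rewrite -sum1dep_card (eq_bigl (fun p => xpredT p.1 && Q (p.1, p.2))) => [|[] //].
rewrite -(pair_big_dep xpredT (fun y a => Q (y, a)) (fun _ _ => 1)).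
by apply: eq_bigr => y _; rewrite sum1dep_card.
Qed.

Lemma size_le_fibers (T : eqType) (U : finType) (f : T -> U) (S : {set U}) m s :
  {in s, forall z, f z \in S} -> (forall u, count (fun z => f z == u) s <= m) ->
  size s <= #|S| * m.
Proof.
move=> fS fib; rewrite -sum1_size big_seq (partition_big f (mem S)) //=.
rewrite -sum_nat_const; apply: leq_sum => u _.
by rewrite -big_seq_cond sum1_count.
Qed.

Lemma uniq_count_gt2 (T : eqType) (p : pred T) (s : seq T) :
  uniq s -> 2 < count p s ->
  exists z1 z2 z3, [/\ [&& z1 \in s, z2 \in s & z3 \in s], [&& p z1, p z2 & p z3] &
     [&& z1 != z2, z2 != z3 & z1 != z3]].
Proof.
move=> us; rewrite -size_filter.
have mem z : z \in filter p s -> (z \in s) && p z by rewrite mem_filter andbC.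
case: (filter p s) (filter_uniq p us) mem => [|z1 [|z2 [|z3 t]]] //= + mem _.
rewrite !inE !negb_or => /and3P[/and3P[n12 n13 _] /andP[n23 _] _].
have /andP[i1 p1] := mem z1 (mem_head _ _).
have /andP[i2 p2] : (z2 \in s) && p z2 by apply: mem; rewrite !inE eqxx orbT.
have /andP[i3 p3] : (z3 \in s) && p z3 by apply: mem; rewrite !inE eqxx !orbT.
by exists z1, z2, z3; rewrite i1 i2 i3 p1 p2 p3 n12 n23 n13.
Qed.

Section ExtensionCount.
Variables (A : finType) (L : seq A -> bool) (n K : nat).
Variable ext : n.-tuple A * A -> n.+1.-tuple A.
Hypotheses (ext_inj : injective ext)
  (ext_factor : forall p, L (ext p) -> L p.1)
  (ext_extendable : forall y : n.-tuple A, L y -> exists a, L (ext (y, a)))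
  (growth : complexity L n.+1 = complexity L n + K).

Lemma complexityS_ext :
  complexity L n.+1 = \sum_(y : n.-tuple A | L y) #|[set a | L (ext (y, a))]|.
Proof.
have ext_onto t : t \in codom ext.
  by apply: inj_card_onto; rewrite // card_prod !card_tuple expnS mulnC.
have -> : complexity L n.+1 = #|[set p | L (ext p)]|.
  rewrite /complexity -(card_imset _ ext_inj); congr #|pred_of_set _|.
  apply/setP => t; rewrite inE; apply/idP/imsetP => [Lt|[p + ->]]; last by rewrite inE.
  by have /codomP[p Et] := ext_onto t; exists p; rewrite // inE -Et.
rewrite card_set_pair (bigID (fun y : n.-tuple A => L y)) /=.
rewrite [X in _ + X]big1 ?addn0 // => y /negP Ly; apply/eqP; rewrite cards_eq0.
by apply/eqP/setP => a; rewrite !inE; apply/negP => /ext_factor.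
Qed.

Lemma sum_extensions_sub1 :
  \sum_(y : n.-tuple A | L y) (#|[set a | L (ext (y, a))]| - 1) = K.
Proof.
have ext_ge1 (y : n.-tuple A) : L y -> 1 <= #|[set a | L (ext (y, a))]|.
  by case/ext_extendable=> a La; rewrite card_gt0; apply/set0Pn; exists a; rewrite inE.
apply/eqP; rewrite -(eqn_add2l (complexity L n)) -growth complexityS_ext.
rewrite /complexity -sum1dep_card -big_split /=.
by apply/eqP/eq_bigr => y Ly; rewrite subnKC ?ext_ge1.
Qed.

Definition ext_keys (c : n.-tuple A -> A) :=
  [set p | [&& L (ext p), L (ext (p.1, c p.1)) & p.2 != c p.1]].

Lemma card_ext_keys c : #|ext_keys c| <= K.
Proof.
rewrite card_set_pair -sum_extensions_sub1 (bigID (fun y : n.-tuple A => L y)) /=.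
rewrite [X in _ + X]big1 ?addn0; last first.
  move=> y /negP Ly; apply/eqP; rewrite cards_eq0; apply/eqP/setP => a.
  by rewrite !inE; apply/negP => /and3P[/ext_factor].
apply: leq_sum => y _; have [Lc|Lc] := boolP (L (ext (y, c y))); last first.
  by rewrite (_ : [set _ | _] = set0) ?cards0 //; apply/setP => a; rewrite !inE /= andbF.
rewrite [X in _ <= X - 1](cardsD1 (c y)) inE Lc add1n subn1 /=; apply: subset_leq_card.
by apply/subsetP => a; rewrite !inE /= andbC.
Qed.

End ExtensionCount.

Section MinimalStep.
Variables (A : finType) (L : seq A -> bool) (x0 : A) (w : seq A) (q : nat).
Hypotheses (HL : is_language L) (Hmin : min_valid_step L w q).
Local Notation pword := (pword x0 w q).
Local Notation pwin := (pwin x0 w q).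
Local Notation n := (size w).
Local Notation exit_form := (exit_form L x0 w q).

Lemma min_step_pwin : [/\ 0 < q, q * 2 <= n, w = pwin 0 n & L (pwin 0 (n + q))].
Proof.
case: Hmin => -[_ q_gt0 q2 Hp Lq] _.
have w_pwin := pwin_periodic x0 q_gt0 Hp.
by split=> //; move: Lq; rewrite (@qpow_pwin _ x0) // ?mul1n; lia.
Qed.

(* Otherwise d mod q would be a smaller valid step. *)
Lemma pword_period_dvd d : (forall k, pword (k + d) = pword k) -> q %| d.
Proof.
move=> Hd; have [q_gt0 q2 w_pwin Lq] := min_step_pwin.
set r := d %% q; have r_lt : r < q by rewrite ltn_pmod.
have Hr k : pword (k + r) = pword k.
  by rewrite -[RHS](Hd k); apply: pword_mod; rewrite modnDmr.
apply/eqP; case: (posnP r) => // r_gt0.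
suff /(proj2 Hmin) : valid_step L w r by lia.
have r_le : r <= n by lia.
split; try lia.
- rewrite {1 3}w_pwin drop_pwin // take_pwin ?leq_subr //.
  by apply: eq_mkseq => k; rewrite !add0n addnC Hr.
- rewrite /qpow /= cats0; have -> : drop (n - r) w = pwin n r.
    rewrite {2}w_pwin drop_pwin ?leq_subr // subKn // add0n.
    by apply: eq_mkseq => k; rewrite -Hr addnAC subnK.
  rewrite {1}w_pwin -[X in pwin X r](add0n n) -pwin_cat.
  apply: (lang_prefix HL (v := pwin (0 + (n + r)) (q - r))).
    by rewrite -pwin_cat -addnA subnKC // ltnW.
  by rewrite -size_eq0 size_pwin; lia.
Qed.

Lemma pwin_shift_dvd x y m : x <= y -> q <= m -> pwin x m = pwin y m -> q %| y - x.
Proof.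
move=> xy qm E; have [q_gt0 _ _ _] := min_step_pwin.
have Exy i : pword (x + i) = pword (y + i).
  have im : i %% q < m by apply: leq_trans qm; rewrite ltn_pmod.
  rewrite (pword_mod x0 w (a := x + i) (b := x + i %% q)) ?modnDmr //.
  rewrite (pword_mod x0 w (a := y + i) (b := y + i %% q)) ?modnDmr //.
  by have := congr1 (nth x0 ^~ (i %% q)) E; rewrite /= !nth_pwin.
have xqE : x * q = x + x * q.-1 by rewrite -{1}(prednK q_gt0) mulnS.
apply: pword_period_dvd => k.
rewrite (pword_mod x0 w (a := k) (b := x + (k + x * q.-1))); last first.
  by rewrite addnCA -xqE addnC modnMDl.
rewrite Exy; apply: pword_mod.
have -> : y + (k + x * q.-1) = x * q + (k + (y - x)) by rewrite xqE; lia.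
by rewrite modnMDl.
Qed.

Lemma lang_pwin x m : 0 < m -> x %% q + m <= n + q -> L (pwin x m).
Proof.
move=> m_gt0 hm; have [_ _ _ Lq] := min_step_pwin.
rewrite (pwin_mod x0 w (s2 := x %% q)) ?modn_mod //.
move: Lq; rewrite -(subnKC hm) pwin_cat -[X in pwin 0 (X + m)]add0n pwin_cat add0n -catA.
by move/(lang_infix HL); apply; rewrite -size_eq0 size_pwin -lt0n.
Qed.

Section ExitFactors.
Variables (a b : A) (s l : nat).
Hypothesis Lz : L (a :: rcons (pwin s l) b).

Lemma exit_lang_prefix m : m <= l -> L (a :: pwin s m).
Proof.
move=> ml; move: Lz; rewrite -(subnKC ml) pwin_cat rcons_cat -cat_cons.
by move/(lang_prefix HL); apply.
Qed.

Lemma exit_lang_suffix m : m <= l -> L (rcons (pwin (s + (l - m)) m) b).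
Proof.
move=> ml; move: Lz; rewrite -{1}(subnK ml) pwin_cat rcons_cat -cat_cons.
by move/(lang_suffix HL); apply; rewrite -size_eq0 size_rcons.
Qed.

Lemma exit_lang_infix i m : 0 < m -> i + m <= l -> L (pwin (s + i) m).
Proof.
move=> m_gt0 iml; move: Lz.
rewrite -(subnKC iml) pwin_cat pwin_cat rcons_cat -catA -cat_cons.
by move/(lang_infix HL); apply; rewrite -size_eq0 size_pwin -lt0n.
Qed.

End ExitFactors.

Local Notation t0 := (nseq_tuple n x0).

Definition exit_key (z : seq A) : (n.-tuple A * A) * (n.-tuple A * A) :=
  ((insubd t0 (take n (behead z)), head x0 z),
   (insubd t0 (take n (drop (size z - n.+1) z)), last x0 z)).

Lemma val_insubd_pwin s : val (insubd t0 (pwin s n)) = pwin s n.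
Proof. by rewrite val_insubd size_pwin eqxx. Qed.

Lemma exit_key_form z s l a b : exit_form z s l a b ->
  exit_key z = ((insubd t0 (pwin s n), a), (insubd t0 (pwin (s + (l - n)) n), b)).
Proof.
case=> -> _ nl _ _; rewrite /exit_key /= size_rcons size_pwin subSS subSn //=.
rewrite drop_rcons ?size_pwin ?leq_subr // drop_pwin ?leq_subr // subKn // last_rcons.
by rewrite -!cats1 takel_cat ?size_pwin // take_pwin // take_size_cat ?size_pwin.
Qed.

Lemma same_key_exit_forms z1 z2 s1 s2 l1 l2 a1 a2 b1 b2 :
  exit_form z1 s1 l1 a1 b1 -> exit_form z2 s2 l2 a2 b2 ->
  exit_key z1 = exit_key z2 -> l1 <= l2 ->
  [/\ s1 = s2, a1 = a2, b1 = b2 & q %| l2 - l1].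
Proof.
move=> F1 F2; rewrite (exit_key_form F1) (exit_key_form F2).
case=> /(congr1 val); rewrite !val_insubd_pwin => El <- /(congr1 val).
rewrite !val_insubd_pwin => Er <- l12.
have [q_gt0 q2 _ _] := min_step_pwin; have q_le : q <= n by lia.
case: F1 F2 => _ /andP[s1_gt0 s1_le] n_l1 _ _ [_ /andP[s2_gt0 s2_le] n_l2 _ _].
have small_dvd d : q %| d -> d < q -> d = 0 by move=> /eqP + dq; rewrite modn_small.
have Es : s1 = s2.
  have [s12|s21] := leqP s1 s2.
    by move: (pwin_shift_dvd s12 q_le El) => /small_dvd; lia.
  by move: (pwin_shift_dvd (ltnW s21) q_le (esym El)) => /small_dvd; lia.
subst s2; split=> //; have := pwin_shift_dvd _ q_le Er.
have -> : s1 + (l2 - n) - (s1 + (l1 - n)) = l2 - l1 by lia.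
by apply; lia.
Qed.

Variable n0 : nat.
Hypotheses (HR : forall v, L v -> n0 <= size v -> bispecial L v -> regular_bispecial L v)
  (n0_le : n0 <= n).

(* The factor t = pwin s l1 occurs in z1 and z3 between a or pword s.-1 on the left and b or
   pword (s + l1) on the right, in all four combinations once l3 > l1 + q. *)
Lemma exit_forms_length_le z1 z3 s l1 l3 a b :
  exit_form z1 s l1 a b -> exit_form z3 s l3 a b -> q %| l3 - l1 -> l3 <= l1 + q.
Proof.
have [q_gt0 q2 _ _] := min_step_pwin.
move=> [-> /andP[s_gt0 s_le] n_l1 /andP[na nb] Latb] [-> _ _ _ L3] ql.
rewrite leqNgt; apply/negP => far.
have Eshift j k : q %| j -> pwin (s.-1 + j) k.+1 = pword s.-1 :: pwin s k.
  move=> /eqP qj; rewrite (pwin_mod x0 w (s2 := s.-1)) ?pwin_cons ?prednK //.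
  by rewrite -modnDmr qj addn0.
apply: (rbc_no_2by2_extensions HL HR (t := pwin s l1) (c := pword s.-1) (d := pword (s + l1))
          _ _ na nb Latb).
- by rewrite size_pwin; lia.
- by rewrite -size_eq0 size_pwin; lia.
- by rewrite -pwin_rcons; apply: (exit_lang_prefix L3); lia.
- have l13 : l1.+1 <= l3 by lia.
  have := exit_lang_suffix L3 l13.
  have -> : s + (l3 - l1.+1) = s.-1 + (l3 - l1) by lia.
  by rewrite Eshift.
- have l13 : q.-1 + l1.+2 <= l3 by lia.
  have := exit_lang_infix L3 (ltn0Sn _) l13.
  have -> : s + q.-1 = s.-1 + q by lia.
  by rewrite Eshift ?dvdnn // pwin_rcons.
Qed.

Lemma same_key_exit_lengths z1 z2 s1 s2 l1 l2 a1 a2 b1 b2 :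
  exit_form z1 s1 l1 a1 b1 -> exit_form z2 s2 l2 a2 b2 ->
  exit_key z1 = exit_key z2 -> z1 != z2 -> l1 + q = l2 \/ l2 + q = l1.
Proof.
wlog l12 : z1 z2 s1 s2 l1 l2 a1 a2 b1 b2 / l1 <= l2.
  move=> IH F1 F2 Ek nz; have [l12|l21] := leqP l1 l2; first exact: IH F1 F2 Ek nz.
  have nz' : z2 != z1 by rewrite eq_sym.
  by case: (IH _ _ _ _ _ _ _ _ _ _ (ltnW l21) F2 F1 (esym Ek) nz'); lia.
move=> F1 F2 Ek nz; have [Es Ea Eb ql] := same_key_exit_forms F1 F2 Ek l12.
subst s2 a2 b2; have [q_gt0 _ _ _] := min_step_pwin.
have l12' : l1 < l2.
  rewrite ltn_neqAle l12 andbT; apply: contra nz => /eqP El.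
  by case: F1 F2 => -> _ _ _ _ [-> _ _ _ _]; rewrite El.
have ql' : q <= l2 - l1 by apply: dvdn_leq ql; rewrite subn_gt0.
by have := exit_forms_length_le F1 F2 ql; lia.
Qed.

Lemma count_exit_key_le2 zs : uniq zs -> {in zs, forall z, exit_word L w q z} ->
  forall k, count (fun z => exit_key z == k) zs <= 2.
Proof.
move=> uzs Hzs k; rewrite leqNgt; apply/negP => /(uniq_count_gt2 uzs).
case=> z1 [z2] [z3] [/and3P[i1 i2 i3] /and3P[/eqP k1 /eqP k2 /eqP k3] /and3P[n12 n23 n13]].
have [q_gt0 q2 w_pwin _] := min_step_pwin.
have form z : z \in zs -> exists s l a b, exit_form z s l a b.
  by move/Hzs; apply: exit_word_form => //; lia.
have [s1 [l1 [a1 [b1 F1]]]] := form _ i1.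
have [s2 [l2 [a2 [b2 F2]]]] := form _ i2.
have [s3 [l3 [a3 [b3 F3]]]] := form _ i3.
have := same_key_exit_lengths F1 F2 (etrans k1 (esym k2)) n12.
have := same_key_exit_lengths F2 F3 (etrans k2 (esym k3)) n23.
have := same_key_exit_lengths F1 F3 (etrans k1 (esym k3)) n13.
lia.
Qed.

(* For y = pwin s n, the letters nth y q.-1 and nth y (n - q) are the letters preceding and
   following y in the periodic word. *)
Definition left_keys := ext_keys L (fun p : n.-tuple A * A => [tuple of p.2 :: p.1])
  (fun y => nth x0 y q.-1).
Definition right_keys := ext_keys L (fun p : n.-tuple A * A => [tuple of rcons p.1 p.2])
  (fun y => nth x0 y (n - q)).

Lemma exit_key_mem z s l a b : exit_form z s l a b -> exit_key z \in setX left_keys right_keys.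
Proof.
move=> F; have [q_gt0 q2 _ _] := min_step_pwin.
rewrite (exit_key_form F) !inE /= !val_insubd_pwin.
case: F => -> /andP[s_gt0 s_le] nl /andP[na nb] Lz.
have Ec : pword (s + q.-1) = pword s.-1.
  by rewrite -[RHS]pwordDr; congr pword; lia.
have Ed : pword (s + (l - n) + (n - q)) = pword (s + l).
  by rewrite -[LHS]pwordDr; congr pword; lia.
have Lc : L (pword s.-1 :: pwin s n).
  rewrite -{2}(prednK s_gt0) -pwin_cons; apply: lang_pwin => //.
  by rewrite modn_small; lia.
have Ld : L (rcons (pwin (s + (l - n)) n) (pword (s + l))).
  have -> : s + l = s + (l - n) + n by lia.
  rewrite -pwin_rcons; apply: lang_pwin => //.
  by have := ltn_pmod (s + (l - n)) q_gt0; lia.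
by rewrite !nth_pwin ?Ec ?Ed ?na ?nb ?Lc ?Ld ?(exit_lang_prefix Lz) ?(exit_lang_suffix Lz); lia.
Qed.

Variable K : nat.
Hypothesis growth : complexity L n.+1 = complexity L n + K.

Lemma card_left_keys : #|left_keys| <= K.
Proof.
have [q_gt0 q2 _ _] := min_step_pwin.
apply: (card_ext_keys _ _ _ growth).
- by move=> [y a] [y' a'] /(congr1 val) [-> /val_inj ->].
- move=> [y a] /= La; apply: (lang_suffix HL (u := [:: a])) La _.
  by rewrite -size_eq0 size_tuple; lia.
- by case: HL => _ _ _ + _; apply.
Qed.

Lemma card_right_keys : #|right_keys| <= K.
Proof.
have [q_gt0 q2 _ _] := min_step_pwin.
apply: (card_ext_keys _ _ _ growth).
- by move=> [y a] [y' a'] /(congr1 val) /rcons_inj [/val_inj -> ->].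
- move=> [y a] /=; rewrite -cats1 => La; apply: (lang_prefix HL) La _.
  by rewrite -size_eq0 size_tuple; lia.
- by case: HL => _ _ _ _; apply.
Qed.

Lemma size_exit_words_le zs : uniq zs -> {in zs, forall z, exit_word L w q z} ->
  size zs <= 2 * K ^ 2.
Proof.
move=> uzs Hzs; have [q_gt0 q2 w_pwin _] := min_step_pwin; have q_le : q <= n by lia.
have keys_mem z : z \in zs -> exit_key z \in setX left_keys right_keys.
  by move/Hzs/(exit_word_form q_gt0 q_le w_pwin) => -[s [l [a [b /exit_key_mem]]]].
apply: leq_trans (size_le_fibers keys_mem (count_exit_key_le2 uzs Hzs)) _.
by rewrite cardsX mulnC leq_mul2l /= expnS expn1 leq_mul ?card_left_keys ?card_right_keys.
Qed.

End MinimalStep.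

Theorem mainTheorem16 (A : finType) (L : seq A -> bool) (K : nat) :
  is_language L -> RBC L -> growth_constant L K ->
  exists N, forall w : seq A, L w -> N <= size w ->
    (exists q, valid_step L w q) ->
    forall q, min_valid_step L w q ->
    forall zs : seq (seq A), uniq zs ->
      (forall z, z \in zs -> exit_word L w q z) ->
      size zs <= 2 * K ^ 2.
Proof.
move=> HL [n0 HR] [n1 growth]; exists (n0 + n1) => w Lw Nw _ q Hmin zs uzs Hzs.
have w_nil : w != [::] by case: HL Lw => + _ _ _ _; apply.
have [x0 _] : exists x0, x0 \in w.
  by case: w w_nil {Lw Nw Hmin Hzs} => // x0 w' _; exists x0; rewrite mem_head.
apply: (size_exit_words_le x0 HL Hmin HR _ (growth _ _) uzs Hzs); lia.
Qed.
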